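(* Let $L$ be a positive integer and let $a,b,s$ be integers with $a\mid L$, $b\mid L$, $0\le s<b$ and $s\in\frac{ab}{\gcd(ab,L)}\mathbb{Z}$. Let $k_1,k_2\in\mathbb{Z}$ satisfy $k_1s+k_2b=\gcd(b,s)$, and set $\tilde b=\gcd(b,s)$, $\tilde a=ab/\gcd(b,s)$, $\tilde s=k_1a$. Then $$\begin{pmatrix} a & 0\\ s & b\end{pmatrix}\mathbb{Z}_L^2=\begin{pmatrix} \tilde a & \tilde s\\ 0 & \tilde b\end{pmatrix}\mathbb{Z}_L^2 .$$
   Context: $\mathbb{Z}_L=\mathbb{Z}/L\mathbb{Z}$; for an integer matrix $A$, $A\mathbb{Z}_L^2=\{Az\bmod L: z\in\mathbb{Z}_L^2\}$. Here $\gcd(b,0)=b$. *)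

From HB Require Import structures.
From mathcomp Require Import all_boot all_order all_algebra.
Set Implicit Arguments. Unset Strict Implicit. Unset Printing Implicit Defensive.
Import Order.TTheory GRing.Theory Num.Theory.
Local Open Scope ring_scope.

Definition mx2 (p q r t : int) : 'M[int]_2 :=
  \matrix_(i < 2, j < 2)
    if (i : nat) == 0%N then (if (j : nat) == 0%N then p else q)
    else (if (j : nat) == 0%N then r else t).

Definition modL (L : int) (v : 'cV[int]_2) : 'cV[int]_2 :=
  map_mx (fun x => (x %% L)%Z) v.

(* A Z_L^2 = { A z mod L : z in Z_L^2 }, with elements of Z_L represented by
   their least non-negative residues.  Letting z range over Z^2 gives the same
   set, since A z mod L only depends on z mod L. *)
Definition mx_image (L : int) (A : 'M[int]_2) : 'cV[int]_2 -> Prop :=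
  fun v => exists z : 'cV[int]_2, v = modL L (A *m z).

From HB Require Import structures.
From mathcomp Require Import all_boot all_order all_algebra.
From mathcomp Require Import ring.
Import Order.TTheory GRing.Theory Num.Theory.
Local Open Scope ring_scope.

(* Writing b = b' g and s = s' g with g = gcd(b, s), the first matrix is the
   second one times the matrix [[k2, -k1]; [s', b']], whose determinant
   k1 s' + k2 b' is 1.  So the two matrices already span the same lattice
   of Z^2, and hence the same subgroup of Z_L^2. *)

Lemma mx2_mul p q r t p' q' r' t' :
  mx2 p q r t *m mx2 p' q' r' t' =
  mx2 (p * p' + q * r') (p * q' + q * t') (r * p' + t * r') (r * q' + t * t').
Proof.
apply/matrixP => i j; rewrite !mxE big_ord_recr big_ord1 /= !mxE.
by case: i => [[|[|//]]] ?; case: j => [[|[|//]]] ?.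
Qed.

Lemma mx_image_mulmxr L (A U : 'M[int]_2) v :
  mx_image L (A *m U) v -> mx_image L A v.
Proof. by case=> z ->; exists (U *m z); rewrite mulmxA. Qed.

Lemma mx_image_mulmx_rinv L (A U V : 'M[int]_2) v :
  U *m V = 1%:M -> mx_image L (A *m U) v <-> mx_image L A v.
Proof.
move=> UV; split; first exact: mx_image_mulmxr.
by rewrite -[in X in X -> _](mulmx1 A) -UV mulmxA; apply: mx_image_mulmxr.
Qed.

Section HermiteFactorization.

Context {b' s' k1 k2 : int}.
Hypothesis bezout : k1 * s' + k2 * b' = 1.

Lemma mx2_hermite_factor a g :
  mx2 a 0 (s' * g) (b' * g) = mx2 (a * b') (k1 * a) 0 g *m mx2 k2 (- k1) s' b'.
Proof.
by rewrite mx2_mul; congr mx2; [rewrite -[LHS]mulr1 -bezout | ..]; ring.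
Qed.

Lemma mx2_unimodular_rinv :
  mx2 k2 (- k1) s' b' *m mx2 b' k1 (- s') k2 = 1%:M.
Proof.
have -> : 1%:M = mx2 1 0 0 1.
  by apply/matrixP => i j; rewrite !mxE; case: i => [[|[|//]]] ?; case: j => [[|[|//]]] ?.
by rewrite mx2_mul -bezout; congr mx2; ring.
Qed.

End HermiteFactorization.

Theorem proposition2p2 (L : nat) (a b s k1 k2 : int) :
  (0 < L)%N ->
  (a %| L%:Z)%Z -> (b %| L%:Z)%Z ->
  0 <= s -> s < b ->
  (divz (a * b) (gcdz (a * b) L%:Z) %| s)%Z ->
  k1 * s + k2 * b = gcdz b s ->
  forall v : 'cV[int]_2,
    mx_image L%:Z (mx2 a 0 s b) v <->
    mx_image L%:Z (mx2 (divz (a * b) (gcdz b s)) (k1 * a) 0 (gcdz b s)) v.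
Proof.
move=> _ _ _ s_ge0 s_lt_b _ bezout_gcd v.
have g_neq0 : gcdz b s != 0.
  by rewrite gcdz_eq0 negb_and gt_eqF // (le_lt_trans s_ge0 s_lt_b).
move: (dvdz_gcdl b s) (dvdz_gcdr b s) bezout_gcd g_neq0.
set g := gcdz b s => /dvdzP[b' ->] /dvdzP[s' ->] bezout_gcd g_neq0.
have bezout : k1 * s' + k2 * b' = 1.
  by apply: (mulIf g_neq0); rewrite mul1r -[RHS]bezout_gcd; ring.
rewrite mulrA mulzK // (mx2_hermite_factor bezout a g).
exact: mx_image_mulmx_rinv (mx2_unimodular_rinv bezout).
Qed.
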